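(* Let $T$ be a tree of order $n>1$ rooted at a vertex $v$, and let $l\ne v$ be a leaf of $T$. Then the number of subtrees of $T$ containing both $v$ and $l$ is at most $2^{n-2}$, with equality if and only if $T$ is the star $S_n$ and $v$ is its center (i.e. $v$ is adjacent to every other vertex of $T$).
   Context: A subtree of a tree $T$ is a connected subgraph of $T$, determined by its nonempty vertex set. A leaf is a vertex of degree $1$. The star $S_n$ consists of a central vertex adjacent to $n-1$ leaves. *)

From mathcomp Require Import all_boot.
Set Implicit Arguments. Unset Strict Implicit. Unset Printing Implicit Defensive.

Definition simple_graph (T : finType) (e : rel T) : Prop :=
  symmetric e /\ irreflexive e.

Definition induced (T : finType) (e : rel T) (S : {set T}) : rel T :=
  [rel x y | [&& x \in S, y \in S & e x y]].

Definition connected_graph (T : finType) (e : rel T) : Prop :=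
  forall x y : T, connect e x y.

(* A cycle: a closed walk x -> p_1 -> ... -> p_k -> x with k >= 2 and all
   vertices x, p_1, ..., p_k distinct (length >= 3). *)
Definition acyclic (T : finType) (e : rel T) : Prop :=
  forall (x : T) (p : seq T),
    2 <= size p -> uniq (x :: p) -> path e x p -> ~~ e (last x p) x.

Definition is_tree (T : finType) (e : rel T) : Prop :=
  simple_graph e /\ connected_graph e /\ acyclic e.

(* A subtree: a connected subgraph determined by its nonempty vertex set S,
   i.e. the subgraph induced by S is connected. *)
Definition is_subtree (T : finType) (e : rel T) (S : {set T}) : bool :=
  (S != set0) && [forall x in S, forall y in S, connect (induced e S) x y].

Definition degree (T : finType) (e : rel T) (x : T) : nat := #|[set y | e x y]|.

Definition is_leaf (T : finType) (e : rel T) (x : T) : bool := degree e x == 1.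

Definition num_subtrees_through (T : finType) (e : rel T) (v l : T) : nat :=
  #|[set S : {set T} | [&& is_subtree e S, v \in S & l \in S]]|.

(* The subtrees through v and l are among the 2^(n-2) vertex sets containing
   v and l, so the bound is a counting triviality and equality means that
   every such set is a subtree. In a star centred at v every set containing v
   is connected. Conversely, {v, l} being connected forces v ~ l, and then,
   for any other vertex u, the only neighbour of the leaf l is v, so u can be
   reached from v inside {v, l, u} only if v ~ u. *)
From mathcomp Require Import all_boot.

Set Implicit Arguments.
Unset Strict Implicit.
Unset Printing Implicit Defensive.

Lemma card_supersets (T : finType) (P : {set T}) :
  #|[set S : {set T} | P \subset S]| = 2 ^ (#|T| - #|P|).
Proof.
have -> : [set S : {set T} | P \subset S] = (@setC T) @: powerset (~: P).
  rewrite (can2_imset_pre _ (@setCK T) (@setCK T)).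
  by apply/setP => S; rewrite !inE setCS.
by rewrite card_imset ?card_powerset ?[#|~: P|]cardsCs ?setCK //; exact: setC_inj.
Qed.

Lemma connect_induced_closed (T : finType) (e : rel T) (S A : {set T}) x y :
  {in A, forall a b, b \in S -> e a b -> b \in A} ->
  x \in A -> connect (induced e S) x y -> y \in A.
Proof.
move=> closedA Ax /connectP[p]; elim: p x Ax => [|z p IHp] x Ax /= => [_ -> //|].
by case/andP=> /and3P[_ Sz exz] /IHp; apply; exact: closedA Sz exz.
Qed.

Lemma is_subtree_connect (T : finType) (e : rel T) (S : {set T}) :
  is_subtree e S -> {in S &, forall x y, connect (induced e S) x y}.
Proof. by case/andP=> _ /forall_inP connS x y Sx; move/forall_inP: (connS x Sx); apply. Qed.

Lemma leaf_neighbor_unique (T : finType) (e : rel T) (l x y : T) :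
  is_leaf e l -> e l x -> e l y -> x = y.
Proof.
case/cards1P=> z neighb_l exl eyl.
have : x \in [set y | e l y] by rewrite inE.
have : y \in [set y | e l y] by rewrite inE.
by rewrite neighb_l !inE => /eqP -> /eqP ->.
Qed.

Section SymmetricGraph.

Variables (T : finType) (e : rel T).
Hypothesis e_sym : symmetric e.

Lemma is_subtree_star_center (v : T) (S : {set T}) :
  (forall u, u != v -> e v u) -> v \in S -> is_subtree e S.
Proof.
move=> star Sv; apply/andP; split; first by apply/set0Pn; exists v.
have to_center x : x \in S -> connect (induced e S) x v.
  case: (eqVneq x v) => [-> | xv] Sx; first exact: connect0.
  by apply: connect1; rewrite /induced /= Sx Sv e_sym star.
apply/forall_inP => x Sx; apply/forall_inP => y Sy.
have induced_sym : symmetric (induced e S) by move=> a b; rewrite /induced /= e_sym andbCA.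
by rewrite (connect_trans (to_center x Sx)) // sym_connect_sym ?to_center.
Qed.

Lemma is_subtree_pair_adj (x y : T) :
  x != y -> is_subtree e [set x; y] -> e x y.
Proof.
move=> xy /is_subtree_connect conn_xy; apply: contraTT xy => nexy.
have Sx : x \in [set x; y] by rewrite !inE eqxx.
have Sy : y \in [set x; y] by rewrite !inE eqxx orbT.
suff : y \in [set x] by rewrite inE eq_sym negbK.
apply: connect_induced_closed (conn_xy x y Sx Sy); last by rewrite inE.
move=> a /set1P -> b; rewrite !inE => /orP[-> // | /eqP ->].
by rewrite (negbTE nexy).
Qed.

Lemma star_center_of_subtree_supersets (v l : T) :
  is_leaf e l -> v != l ->
  (forall S : {set T}, v \in S -> l \in S -> is_subtree e S) ->
  forall u, u != v -> e v u.
Proof.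
move=> leaf_l vl all_subtrees.
have evl : e v l by apply: is_subtree_pair_adj; rewrite // all_subtrees // !inE eqxx ?orbT.
move=> u uv; case: (eqVneq u l) => [-> // | ul]; apply/negPn/negP => nevu.
pose S := [set v; l; u].
have [Sv Sl Su] : [/\ v \in S, l \in S & u \in S] by rewrite !inE !eqxx !orbT.
have conn_vu := is_subtree_connect (all_subtrees S Sv Sl) Sv Su.
suff : u \in [set v; l] by rewrite !inE (negbTE uv) (negbTE ul).
apply: connect_induced_closed conn_vu; last by rewrite !inE eqxx.
move=> a; rewrite !inE => /orP[] /eqP -> b; rewrite !inE.
  by case/orP=> [-> // | /eqP -> evu]; rewrite evu in nevu.
have elv : e l v by rewrite e_sym.
by move=> _ elb; rewrite (leaf_neighbor_unique leaf_l elb elv) eqxx.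
Qed.

End SymmetricGraph.

Theorem mainTheorem12 (T : finType) (e : rel T) (v l : T) :
  is_tree e -> 1 < #|T| -> is_leaf e l -> l != v ->
  num_subtrees_through e v l <= 2 ^ (#|T| - 2) /\
  (num_subtrees_through e v l = 2 ^ (#|T| - 2) <->
   (forall u : T, u != v -> e v u)).
Proof.
move=> [[e_sym _] _] _ leaf_l lv; have vl : v != l by rewrite eq_sym.
pose through := [set S : {set T} | [set v; l] \subset S].
have through_vl S : (S \in through) = (v \in S) && (l \in S).
  by rewrite inE subUset !sub1set.
have card_through : #|through| = 2 ^ (#|T| - 2) by rewrite card_supersets cards2 vl.
have sub_through : [set S | [&& is_subtree e S, v \in S & l \in S]] \subset through.
  by apply/subsetP => S; rewrite inE through_vl => /andP[].
have [le_through eq_through] := subset_leqif_card sub_through.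
rewrite /num_subtrees_through -card_through; split => //.
split => [/eqP | star].
- rewrite eq_through => /subsetP all_subtrees.
  apply: (star_center_of_subtree_supersets e_sym leaf_l vl) => S Sv Sl.
  by have := all_subtrees S; rewrite inE through_vl Sv Sl => /(_ isT)/andP[].
- apply/eqP; rewrite eq_through; apply/subsetP => S.
  rewrite through_vl => /andP[Sv Sl].
  by rewrite inE Sv Sl (is_subtree_star_center e_sym star Sv).
Qed.
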